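(* Let $f\colon G\to H$ and $g\colon G\to K$ be graph maps. (1) For integers $p\ge0$ and $q_1,q_2\ge1$, the commutative square \[\begin{array}{ccc} G\square I_p&\xrightarrow{\ r_p(f,\mathrm{id})\ }&\mathrm{Cyl}_{p+q_1}(f,\mathrm{id}_G)\\ {\scriptstyle \ell_p(\mathrm{id},g)}\downarrow&&\downarrow{\scriptstyle \ell_{p+q_1}(f,g)}\\ \mathrm{Cyl}_{p+q_2}(\mathrm{id}_G,g)&\xrightarrow{\ r_{p+q_2}(f,g)\ }&\mathrm{Cyl}_{p+q_1+q_2}(f,g)\end{array}\] is a $(p+1)$-skeletal pushout. (2) If $f$ is injective, (1) also holds when $q_1=0$. (3) If $g$ is injective, (1) also holds when $q_2=0$.
   Context: Graphs are sets with a reflexive symmetric relation; graph maps preserve it. $I_m$ has vertices $0,\dots,m$ and edges $i\sim i+1$; $G\square H$ has vertex set $V(G)\times V(H)$ and $(v,w)\sim(v',w')$ iff ($v=v'$, $w\sim w'$) or ($v\sim v'$, $w=w'$). For $f\colon G\to H$, $g\colon G\to K$, $\mathrm{Cyl}_m(f,g)$ is the quotient of $H\sqcup(G\square I_m)\sqcup K$ by $(v,0)\sim f(v)$, $(v,m)\sim g(v)$ (a colimit in graphs); in particular $\mathrm{Cyl}_p(\mathrm{id}_G,\mathrm{id}_G)\cong G\square I_p$. For $0\le k\le m$: $\ell_k(f,g)\colon\mathrm{Cyl}_k(f,\mathrm{id}_G)\to\mathrm{Cyl}_m(f,g)$ is the identity on $H$ and sends $(v,t)\mapsto(v,t)$;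 $r_k(f,g)\colon\mathrm{Cyl}_k(\mathrm{id}_G,g)\to\mathrm{Cyl}_m(f,g)$ is the identity on $K$ and sends $(v,t)\mapsto(v,t+m-k)$. The $1$-nerve $N_1G$ is the cubical set (presheaf on the box category with faces, degeneracies and connections) whose $k$-cubes are graph maps $I_1^{\square k}\to G$; $\operatorname{sk}^n$ is the subobject generated by cubes of dimension $\le n$. A commutative square of graphs is an $n$-skeletal pushout if applying $\operatorname{sk}^n\circ N_1$ yields a pushout of cubical sets. *)

From Stdlib Require Import Relations ClassicalEpsilon ProofIrrelevance
  FunctionalExtensionality PropExtensionality.
From HB Require Import structures.
From mathcomp Require Import all_boot.
From mathcomp Require Import zify.

Set Implicit Arguments.
Unset Strict Implicit.
Unset Printing Implicit Defensive.

Record graph := Graph {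
  vert :> Type;
  adj : vert -> vert -> Prop;
  adj_refl : forall x, adj x x;
  adj_sym : forall x y, adj x y -> adj y x }.
Arguments adj {g} _ _.

Definition is_gmap (G H : graph) (f : G -> H) : Prop :=
  forall x y, adj x y -> adj (f x) (f y).

Record gmap (G H : graph) := GMap { gfun :> G -> H; gfunP : is_gmap gfun }.

Definition gid (G : graph) : gmap G G :=
  @GMap G G (fun x => x) (fun x y (h : adj x y) => h).

Lemma sig_eqP (A : Type) (P : A -> Prop) (x y : sig P) :
  proj1_sig x = proj1_sig y -> x = y.
Proof.
case: x => a pa; case: y => b pb /= eab; subst b.
by rewrite (proof_irrelevance _ pa pb).
Qed.

Definition iadj m (i j : 'I_m.+1) : Prop :=
  (i : nat) = j \/ i.+1 = j \/ j.+1 = i.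

Lemma iadj_refl m (i : 'I_m.+1) : iadj i i. Proof. by left. Qed.
Lemma iadj_sym m (i j : 'I_m.+1) : iadj i j -> iadj j i.
Proof. rewrite /iadj; lia. Qed.

Definition intg (m : nat) : graph := Graph (@iadj_refl m) (@iadj_sym m).

Definition bxadj (G H : graph) (x y : G * H) : Prop :=
  (x.1 = y.1 /\ adj x.2 y.2) \/ (adj x.1 y.1 /\ x.2 = y.2).

Lemma bxadj_refl (G H : graph) (x : G * H) : bxadj x x.
Proof. by left; split => //; apply: adj_refl. Qed.
Lemma bxadj_sym (G H : graph) (x y : G * H) : bxadj x y -> bxadj y x.
Proof.
by case=> [[e a]|[a e]]; [left|right]; split => //; apply: adj_sym.
Qed.

Definition boxg (G H : graph) : graph :=
  Graph (@bxadj_refl G H) (@bxadj_sym G H).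

Definition sumadj (A B : graph) (x y : A + B) : Prop :=
  match x, y with
  | inl a, inl a' => adj a a'
  | inr b, inr b' => adj b b'
  | _, _ => False
  end.

Lemma sumadj_refl (A B : graph) (x : A + B) : sumadj x x.
Proof. by case: x => ? /=; apply: adj_refl. Qed.
Lemma sumadj_sym (A B : graph) (x y : A + B) : sumadj x y -> sumadj y x.
Proof. by case: x; case: y => //= ? ?; apply: adj_sym. Qed.

Definition sumg (A B : graph) : graph :=
  Graph (@sumadj_refl A B) (@sumadj_sym A B).

(* Quotient of a graph X by (the equivalence relation generated by) R:
   the colimit in graphs.  Vertices are equivalence classes, and two
   classes are adjacent iff some representatives are. *)
Section Quotient.
Variables (X : graph) (R : X -> X -> Prop).

Definition qeqv : X -> X -> Prop := clos_refl_sym_trans X R.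
Definition qclass (x : X) : X -> Prop := qeqv x.
Definition qvert := {P : X -> Prop | exists x, P = qclass x}.
Definition qadj (P Q : qvert) : Prop :=
  exists x y, proj1_sig P x /\ proj1_sig Q y /\ adj x y.

Lemma qadj_refl P : qadj P P.
Proof.
case: P => P [x ex]; exists x, x; rewrite /= ex; split; first exact: rst_refl.
by split; [exact: rst_refl | apply: adj_refl].
Qed.
Lemma qadj_sym P Q : qadj P Q -> qadj Q P.
Proof. by case=> x [y [px [qy a]]]; exists y, x; do 2 split => //; apply: adj_sym. Qed.

Definition quotg : graph := Graph qadj_refl qadj_sym.

Definition qproj (x : X) : quotg := exist _ (qclass x) (ex_intro _ x erefl).

Lemma qproj_gmap : is_gmap qproj.
Proof.
move=> x y a; change (qadj (qproj x) (qproj y)); rewrite /qadj.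
by exists x, y; split; [exact: rst_refl | split; [exact: rst_refl | done]].
Qed.

Lemma qproj_eq x y : qeqv x y -> qproj x = qproj y.
Proof.
move=> e; apply: sig_eqP => /=; apply: functional_extensionality => z.
apply: propositional_extensionality; split => h.
- by apply: rst_trans h; apply: rst_sym.
- exact: rst_trans e h.
Qed.

Definition qrep (P : quotg) : X :=
  proj1_sig (constructive_indefinite_description _ (proj2_sig P)).

Lemma qrepP (P : quotg) : proj1_sig P = qclass (qrep P).
Proof. exact: (proj2_sig (constructive_indefinite_description _ (proj2_sig P))). Qed.

Variables (Y : graph) (psi : gmap X Y).
Hypothesis psiR : forall x y, R x y -> psi x = psi y.

Lemma psi_eqv x y : qeqv x y -> psi x = psi y.
Proof.
elim.
- by move=> ? ? ?; apply: psiR.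
- by [].
- by move=> ? ? _ ->.
- by move=> ? ? ? _ -> _ ->.
Qed.

Definition qlift (P : quotg) : Y := psi (qrep P).

Lemma qlift_gmap : is_gmap qlift.
Proof.
move=> P Q; case=> x [y [px [qy a]]]; rewrite /qlift.
rewrite qrepP in px; rewrite qrepP in qy.
rewrite (psi_eqv px) (psi_eqv qy); exact: gfunP.
Qed.

Definition qliftg : gmap quotg Y := GMap qlift_gmap.
End Quotient.

(* Mapping cylinders Cyl_m(f,g): the quotient of                      *)
(*   H + (G [] I_m) + K   by  (v,0) ~ f v,  (v,m) ~ g v.              *)
Section Cylinder.
Variables (G H K : graph) (f : gmap G H) (g : gmap G K).

Definition cylX (m : nat) : graph := sumg H (sumg (boxg G (intg m)) K).

Definition cylR (m : nat) (x y : cylX m) : Prop :=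
  exists v : G,
    (x = inr (inl (v, ord0)) /\ y = inl (f v)) \/
    (x = inr (inl (v, ord_max)) /\ y = inr (inr (g v))).

Definition Cyl (m : nat) : graph := quotg (@cylR m).
Definition cproj (m : nat) (x : cylX m) : Cyl m := qproj (@cylR m) x.

Lemma cproj_gmap m : is_gmap (@cproj m).
Proof. exact: qproj_gmap. Qed.

Lemma cproj_R m x y : @cylR m x y -> cproj x = cproj y.
Proof. by move=> r; apply: qproj_eq; apply: rst_step. Qed.
End Cylinder.

Definition clamp (m t : nat) : 'I_m.+1 := inord (minn t m).

Lemma clampE m t : (clamp m t : nat) = minn t m.
Proof. by rewrite /clamp inordK // ltnS geq_minr. Qed.

Lemma clamp_adj m c (a b : nat) :
  (a = b \/ a.+1 = b \/ b.+1 = a) -> iadj (clamp m (a + c)) (clamp m (b + c)).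
Proof. rewrite /iadj !clampE; lia. Qed.

Section Maps.
Variables (G H K : graph) (f : gmap G H) (g : gmap G K).

(* l_k(f,g) : Cyl_k(f, id_G) -> Cyl_m(f,g): identity on H, (v,t) |-> (v,t)
   (the copy of G at the end is glued to the level k, so v |-> (v,k)).
   The level is clamped to [0,m]; for k <= m (the only case used) no
   clamping ever happens. *)
Definition l0 (k m : nat) (x : cylX G H G k) : Cyl f g m :=
  match x with
  | inl h => cproj f g (inl h)
  | inr (inl (v, t)) => cproj f g (inr (inl (v, clamp m (t + 0))))
  | inr (inr v) => cproj f g (inr (inl (v, clamp m (k + 0))))
  end.

(* r_k(f,g) : Cyl_k(id_G, g) -> Cyl_m(f,g): identity on K,
   (v,t) |-> (v, t + m - k) (the initial copy of G is glued to level 0,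
   so v |-> (v, m - k)). *)
Definition r0 (k m : nat) (x : cylX G G K k) : Cyl f g m :=
  match x with
  | inl v => cproj f g (inr (inl (v, clamp m (0 + (m - k)))))
  | inr (inl (v, t)) => cproj f g (inr (inl (v, clamp m (t + (m - k)))))
  | inr (inr w) => cproj f g (inr (inr w))
  end.

Lemma box_adj_cproj m (v v' : G) (t t' : 'I_m.+1) :
  (v = v' /\ iadj t t') \/ (adj v v' /\ t = t') ->
  adj (cproj f g (inr (inl (v, t)))) (cproj f g (inr (inl (v', t')))).
Proof. by move=> h; apply: cproj_gmap. Qed.

Lemma l0_gmap k m : is_gmap (@l0 k m).
Proof.
case=> [h|[[v t]|v]]; case=> [h'|[[v' t']|v']] //= a.
- exact: cproj_gmap.
- apply: box_adj_cproj; case: a => /= [[-> a]|[a ->]]; last by right.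
  by left; split=> //; apply: clamp_adj.
- by apply: box_adj_cproj; right.
Qed.

Lemma l0_R k m x y : @cylR G H G f (gid G) k x y -> @l0 k m x = @l0 k m y.
Proof.
case=> v [[-> ->]|[-> ->]] //=.
apply: cproj_R; exists v; left; split => //; congr (inr (inl (_, _))).
by apply: val_inj; rewrite /= clampE; lia.
Qed.

Lemma r0_gmap k m : is_gmap (@r0 k m).
Proof.
case=> [h|[[v t]|v]]; case=> [h'|[[v' t']|v']] //= a.
- by apply: box_adj_cproj; right.
- apply: box_adj_cproj; case: a => /= [[-> a]|[a ->]]; last by right.
  by left; split=> //; apply: clamp_adj.
- exact: cproj_gmap.
Qed.

Lemma r0_R k m x y : @cylR G G K (gid G) g k x y -> @r0 k m x = @r0 k m y.
Proof.
case=> v [[-> ->]|[-> ->]] //=.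
apply: cproj_R; exists v; right; split => //; congr (inr (inl (_, _))).
by apply: val_inj; rewrite /= clampE; lia.
Qed.

Definition lmap (k m : nat) : gmap (Cyl f (gid G) k) (Cyl f g m) :=
  qliftg (psi := GMap (@l0_gmap k m)) (@l0_R k m).

Definition rmap (k m : nat) : gmap (Cyl (gid G) g k) (Cyl f g m) :=
  qliftg (psi := GMap (@r0_gmap k m)) (@r0_R k m).
End Maps.

(* The box category (with faces, degeneracies and both connections),   *)
(* realised as the subcategory of graphs/posets on the cubes           *)
(* I_1^{[]n}, whose vertices are functions 'I_n -> bool, generated by  *)
(* the face, degeneracy and connection maps.                           *)
Definition cpt (n : nat) := 'I_n -> bool.

Definition cadj n (s t : cpt n) : Prop :=
  forall j j' : 'I_n, s j <> t j -> s j' <> t j' -> j = j'.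

Definition face m (i : 'I_m.+1) (e : bool) (s : cpt m) : cpt m.+1 :=
  fun j => if unlift i j is Some j' then s j' else e.

Definition degen n (i : 'I_n.+1) (s : cpt n.+1) : cpt n :=
  fun j => s (lift i j).

(* connection g_{i,e} : [1]^(n+1) -> [1]^n, replacing coordinates i, i+1
   by their max (e = true) or min (e = false) *)
Definition conn n (i : 'I_n) (e : bool) (s : cpt n.+1) : cpt n :=
  fun j => let b := lift ord0 i in
    if j == i then (if e then s (lift b j) || s b else s (lift b j) && s b)
    else s (lift b j).

Inductive box_map : forall m n : nat, (cpt m -> cpt n) -> Prop :=
| bm_id n : box_map (fun s : cpt n => s)
| bm_face m i e : box_map (@face m i e)
| bm_degen n i : box_map (@degen n i)
| bm_conn n i e : box_map (@conn n i e)
| bm_comp k m n (phi : cpt k -> cpt m) (psi : cpt m -> cpt n) :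
    box_map phi -> box_map psi -> box_map (fun s => psi (phi s)).

Lemma face_cadj m i e (s t : cpt m) : cadj s t -> cadj (face i e s) (face i e t).
Proof.
move=> h j j'; rewrite /face.
case: unliftP => [a ->|->]; last by [].
case: unliftP => [b ->|->]; last by [].
by move=> ha hb; rewrite (h a b ha hb).
Qed.

Lemma degen_cadj n i (s t : cpt n.+1) : cadj s t -> cadj (degen i s) (degen i t).
Proof. by move=> h j j' ha hb; exact: (@lift_inj _ i _ _ (h _ _ ha hb)). Qed.

Lemma conn_cadj n i e (s t : cpt n.+1) : cadj s t -> cadj (conn i e s) (conn i e t).
Proof.
move=> h.
have key : forall j : 'I_n, conn i e s j <> conn i e t j ->
    s (lift (lift ord0 i) j) <> t (lift (lift ord0 i) j) \/
    (j = i /\ s (lift ord0 i) <> t (lift ord0 i)).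
  move=> j; rewrite /conn; case: eqP => [->|_]; last by left.
  case: (boolP (s (lift (lift ord0 i) i) == t (lift (lift ord0 i) i))) => [/eqP ->|/eqP]; last by left.
  case: (boolP (s (lift ord0 i) == t (lift ord0 i))) => [/eqP -> //|/eqP]; by right.
move=> j j' /key hj /key hj'.
case: hj => [hj|[-> hj]]; case: hj' => [hj'|[-> hj']] //.
- exact: (@lift_inj _ (lift ord0 i) _ _ (h _ _ hj hj')).
- by have := h _ _ hj hj' => /eqP; rewrite eq_sym (negbTE (neq_lift _ _)).
- by have := h _ _ hj hj' => /eqP; rewrite (negbTE (neq_lift _ _)).
Qed.

Lemma box_cadj m n (phi : cpt m -> cpt n) : box_map phi ->
  forall s t, cadj s t -> cadj (phi s) (phi t).
Proof.
elim=> {m n phi}.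
- by [].
- by move=> ? ? ? ? ?; apply: face_cadj.
- by move=> ? ? ? ?; apply: degen_cadj.
- by move=> ? ? ? ? ?; apply: conn_cadj.
- by move=> k m n phi psi _ hphi _ hpsi s t h; apply: hpsi; apply: hphi.
Qed.

Unset Implicit Arguments.
Record cset := CSet {
  cell : nat -> Type;
  act : forall m n (phi : cpt m -> cpt n), box_map phi -> cell n -> cell m;
  act_irr : forall m n (phi : cpt m -> cpt n) (p p' : box_map phi) x,
      act m n phi p x = act m n phi p' x;
  act_id : forall n x, act n n (fun s => s) (bm_id n) x = x;
  act_comp : forall k m n (phi : cpt k -> cpt m) (psi : cpt m -> cpt n)
      (p : box_map phi) (q : box_map psi) x,
      act k n (fun s => psi (phi s)) (bm_comp p q) x = act k m phi p (act m n psi q x) }.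
Arguments act c {m n phi} p x.

Record cmap (X Y : cset) := CMap {
  cfun :> forall n, cell X n -> cell Y n;
  cfun_nat : forall m n (phi : cpt m -> cpt n) (p : box_map phi) x,
      cfun m (act X p x) = act Y p (cfun n x) }.
Arguments cfun {X Y} c n x.
Arguments CMap {X Y} cfun cfun_nat.
Set Implicit Arguments.

Definition is_pushout (A B C D : cset) (a : cmap A B) (a' : cmap A C)
    (b : cmap B D) (c : cmap C D) : Prop :=
  (forall n x, b n (a n x) = c n (a' n x)) /\
  forall (T : cset) (hB : cmap B T) (hC : cmap C T),
    (forall n x, hB n (a n x) = hC n (a' n x)) ->
    exists h : cmap D T,
      ((forall n x, h n (b n x) = hB n x) /\ (forall n x, h n (c n x) = hC n x)) /\
      forall h' : cmap D T,
        (forall n x, h' n (b n x) = hB n x) ->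
        (forall n x, h' n (c n x) = hC n x) ->
        forall n x, h' n x = h n x.

(* The 1-nerve N_1 G (k-cubes = graph maps I_1^{[]k} -> G) and its     *)
(* N-skeleton: the k-cubes of the form y o phi with y an m-cube,       *)
(* m <= N, and phi a box map.                                          *)
Definition is_cube (G : graph) n (c : cpt n -> G) : Prop :=
  forall s t, cadj s t -> adj (c s) (c t).

Definition in_sk (G : graph) (N n : nat) (c : cpt n -> G) : Prop :=
  exists m, m <= N /\ exists y : cpt m -> G, is_cube y /\
    exists phi : cpt n -> cpt m, box_map phi /\ c = (fun s => y (phi s)).

Definition skcell (G : graph) (N n : nat) :=
  {c : cpt n -> G | is_cube c /\ in_sk N c}.

Lemma skact_proof (G : graph) N m n (phi : cpt m -> cpt n) (p : box_map phi)
  (x : skcell G N n) :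
  is_cube (fun s => proj1_sig x (phi s)) /\ in_sk N (fun s => proj1_sig x (phi s)).
Proof.
case: x => c [hc [k [hk [y [hy [psi [hpsi ec]]]]]]] /=; split.
- by move=> s t h; apply: hc; apply: box_cadj.
- exists k; split => //; exists y; split => //.
  by exists (fun s => psi (phi s)); split; [exact: bm_comp | rewrite ec].
Qed.

Definition skact (G : graph) N m n (phi : cpt m -> cpt n) (p : box_map phi)
  (x : skcell G N n) : skcell G N m :=
  exist _ (fun s => proj1_sig x (phi s)) (skact_proof p x).

Definition skN (G : graph) (N : nat) : cset.
Proof.
refine (@CSet (skcell G N) (@skact G N) _ _ _).
- by move=> *; apply: sig_eqP.
- by move=> n [c pc]; apply: sig_eqP.
- by move=> *; apply: sig_eqP.
Defined.

Lemma skmap_proof (G H : graph) (f : gmap G H) N n (x : skcell G N n) :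
  is_cube (fun s => f (proj1_sig x s)) /\ in_sk N (fun s => f (proj1_sig x s)).
Proof.
case: x => c [hc [k [hk [y [hy [psi [hpsi ec]]]]]]] /=; split.
- by move=> s t h; apply: gfunP; apply: hc.
- exists k; split => //; exists (fun s => f (y s)); split.
  + by move=> s t h; apply: gfunP; apply: hy.
  + by exists psi; split => //; rewrite ec.
Qed.

Definition skmap (G H : graph) (N : nat) (f : gmap G H) : cmap (skN G N) (skN H N).
Proof.
refine (@CMap (skN G N) (skN H N)
          (fun n x => exist _ (fun s => f (proj1_sig x s)) (skmap_proof f x)) _).
by move=> *; apply: sig_eqP.
Defined.

Definition skel_pushout (N : nat) (A B C D : graph) (a : gmap A B) (a' : gmap A C)
    (b : gmap B D) (c : gmap C D) : Prop :=
  is_pushout (skmap N a) (skmap N a') (skmap N b) (skmap N c).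

Definition cyl_square (G H K : graph) (f : gmap G H) (g : gmap G K)
    (p q1 q2 : nat) : Prop :=
  skel_pushout p.+1
    (rmap f (gid G) p (p + q1))           (* Cyl_p(id,id) = G[]I_p -> Cyl_{p+q1}(f,id) *)
    (lmap (gid G) g p (p + q2))
    (lmap f g (p + q1) (p + q1 + q2))
    (rmap f g (p + q2) (p + q1 + q2)).

From mathcomp Require Import all_boot zify.
From Stdlib Require Import Relations ClassicalEpsilon FunctionalExtensionality
  Classical.
Set Implicit Arguments.
Unset Strict Implicit.
Unset Printing Implicit Defensive.

(* The skeletal pushout property is checked cube by cube: both legs into
   Cyl_{p+q1+q2}(f,g) are injective, every cube of dimension at most p+1 of
   the target lifts along one of them, and a cube of Cyl_{p+q2}(id,g) lying
   in the image of the other leg lifts to G [] I_p.  All of this comes from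
   the level of a vertex along the cylinder, which changes by at most one
   along edges: a cube of dimension at most p+1 spans at most p+2
   consecutive levels, so it lies in the levels <= p+q1+1, covered by
   Cyl_{p+q1}(f,id), or in the levels >= q1+1, covered by Cyl_{p+q2}(id,g),
   and on each such range the gluing can be undone by an explicit section.
   When q1 = 0 (resp. q2 = 0) this section is well defined on H (resp. K)
   only because f (resp. g) is injective. *)

(* [F j = Some b] fixes coordinate [j] to [b]; [None] leaves it free. *)
Definition subcube m (F : 'I_m -> option bool) (t : cpt m) : Prop :=
  forall j b, F j = Some b -> t j = b.

(* The value of [x || y] (if [e]) or [x && y] on partially known bits. *)
Definition oconn (e : bool) (a b : option bool) : option bool :=
  match e, a, b with
  | true, Some true, _ | true, _, Some true => Some true
  | true, Some false, Some false => Some false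
  | false, Some false, _ | false, _, Some false => Some false
  | false, Some true, Some true => Some true
  | _, _, _ => None
  end.

Lemma box_map_subcube m n (phi : cpt m -> cpt n) : box_map phi ->
  forall F, exists F', forall u, subcube F' u <-> exists t, subcube F t /\ phi t = u.
Proof.
elim=> {m n phi}.
- move=> n F; exists F => u; split; first by move=> h; exists u.
  by case=> t [h <-].
- move=> m i e F.
  exists (fun j => if unlift i j is Some j' then F j' else Some e) => u; split.
  + move=> h; exists (fun j' => u (lift i j')); split.
    * by move=> j b Fj; apply: h; rewrite liftK.
    * apply: functional_extensionality => j; rewrite /face.
      case: unliftP => [j' ->|->] //.
      by symmetry; apply: h; rewrite unlift_none.
  + case=> t [ht <-] j b; rewrite /face.
    by case: unliftP => [j' _|_ [] //]; apply: ht.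
- move=> n i F; exists (fun j => F (lift i j)) => u; split.
  + move=> h; exists (face i (odflt false (F i)) u); split.
    * move=> j b; rewrite /face; case: unliftP => [j' -> Fj|-> ->] //.
      exact: h.
    * by apply: functional_extensionality => j; rewrite /degen /face liftK.
  + by case=> t [ht <-] j b Fj; apply: ht.
- move=> n i e F; set bb := lift ord0 i.
  exists (fun j => if j == i then oconn e (F (lift bb i)) (F bb) else F (lift bb j)).
  move=> u; split.
  + move=> h; set x := odflt (u i) (F (lift bb i)); set y := odflt (u i) (F bb).
    exists (face bb y (fun j => if j == i then x else u j)); split.
    * move=> j b; rewrite /face; case: unliftP => [j' -> Fj|-> Fj].
      -- case: eqP => [ej|/eqP/negbTE nej]; first by rewrite /x -ej Fj.
         by apply: h; rewrite nej.
      -- by rewrite /y Fj.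
    * apply: functional_extensionality => j.
      rewrite /conn /face -/bb liftK unlift_none.
      case: eqP => [->|//].
      have := h i; rewrite eqxx /x /y; clear x y h.
      by case: e; case: (F (lift bb i)) => [[]|]; case: (F bb) => [[]|] /=;
        case: (u i) => //= H; rewrite ?(H _ erefl).
  + case=> t [ht <-] j b; rewrite /conn.
    case: eqP => [->|_]; last exact: ht.
    rewrite -/bb; move: (ht (lift bb i)) (ht bb); clear ht.
    case: e; case: (F (lift bb i)) => [[]|]; case: (F bb) => [[]|] /= H1 H2 E;
      try discriminate E; case: E => <-;
      by rewrite ?(H1 _ erefl) ?(H2 _ erefl) ?orbT ?andbF.
- move=> k m n phi psi _ IH1 _ IH2 F.
  have [F1 H1] := IH1 F; have [F2 H2] := IH2 F1.
  exists F2 => u; split.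
  + by move/H2 => [t [/H1 [s [hs <-]] <-]]; exists s.
  + case=> s [hs <-]; apply/H2; exists (phi s); split => //; apply/H1; by exists s.
Qed.

Lemma subcube_retract m (F : 'I_m -> option bool) :
  exists k, k <= m /\ exists i : cpt k -> cpt m, box_map i /\
    exists r : cpt m -> cpt k, box_map r /\
      (forall t, subcube F t -> i (r t) = t) /\ (forall u, subcube F (i u)).
Proof.
elim: m F => [|m IH] F.
  exists 0; split => //; exists id; split; first exact: bm_id.
  exists id; split; first exact: bm_id.
  by split => // u [].
case: (classic (exists j, F j <> None)) => [[j]|nF].
- case Ej: (F j) => [c|] // _.
  have [k [lek [i [bi [r [br [ri ir]]]]]]] := IH (fun j' => F (lift j j')).
  exists k; split; first exact: leq_trans lek _.
  exists (fun u => face j c (i u)); split; first exact: bm_comp bi (bm_face j c).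
  exists (fun t => r (degen j t)); split; first exact: bm_comp (bm_degen j) br.
  split.
  + move=> t ht; rewrite ri; last by move=> j' b Fj'; apply: ht.
    apply: functional_extensionality => j'; rewrite /face /degen.
    case: unliftP => [j'' ->|->] //.
    by symmetry; apply: ht.
  + move=> u j' b; rewrite /face; case: unliftP => [j'' ->|->]; first exact: ir.
    by rewrite Ej => -[].
- exists m.+1; split => //; exists id; split; first exact: bm_id.
  exists id; split; first exact: bm_id.
  split => // u j b Fj; exfalso; apply: nF; exists j; by rewrite Fj.
Qed.

Lemma is_cube_comp (X : graph) m n (y : cpt m -> X) (phi : cpt n -> cpt m) :
  is_cube y -> box_map phi -> is_cube (fun s => y (phi s)).
Proof. by move=> hy bp s t st; apply: hy; apply: box_cadj bp _ _ st. Qed.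

(* Restrict the factoring cube to the image of the box map, which is a
   subcube, and retract that subcube onto a cube of lower dimension. *)
Lemma in_sk_factor (X : graph) N n (x : cpt n -> X) : in_sk N x ->
  exists m, m <= N /\ exists w : cpt m -> X, is_cube w /\
    (forall u, exists s, w u = x s) /\
    exists psi : cpt n -> cpt m, box_map psi /\ x = (fun s => w (psi s)).
Proof.
case=> m [leN [y [hy [phi [bphi ->]]]]].
have [F' HF] := box_map_subcube bphi (fun _ => None).
have [k [lek [i [bi [r [br [ri ir]]]]]]] := subcube_retract F'.
exists k; split; first exact: leq_trans lek leN.
exists (fun u => y (i u)); split; first exact: is_cube_comp.
split.
- by move=> u; have /HF [t [_ <-]] := ir u; exists t.
- exists (fun s => r (phi s)); split; first exact: bm_comp bphi br.
  apply: functional_extensionality => s; rewrite ri //.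
  by apply/HF; exists s.
Qed.

Lemma skmap_inj (X Y : graph) (h : gmap X Y) N n (x y : skcell X N n) :
  injective h -> skmap N h n x = skmap N h n y -> x = y.
Proof.
move=> hi e; apply: sig_eqP; apply: functional_extensionality => s.
by apply: hi; have := congr1 (fun z => proj1_sig z s) e.
Qed.

Lemma skcell_of_cube (X : graph) N m n (y : cpt m -> X) (phi : cpt n -> cpt m) :
  m <= N -> is_cube y -> box_map phi ->
  exists x : skcell X N n, proj1_sig x = (fun s => y (phi s)).
Proof.
move=> lem hy bphi.
have P : is_cube (fun s => y (phi s)) /\ in_sk N (fun s => y (phi s)).
  split; first exact: is_cube_comp.
  by exists m; split => //; exists y; split => //; exists phi.
by exists (exist (fun x => is_cube x /\ in_sk N x) _ P).
Qed.

Lemma is_pushout_sym (A B C D : cset) (a : cmap A B) (a' : cmap A C)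
    (b : cmap B D) (c : cmap C D) :
  is_pushout a' a c b -> is_pushout a a' b c.
Proof.
case=> comm univ; split; first by move=> n x; rewrite comm.
move=> T hB hC hBC.
have [h [[e1 e2] uniq]] := univ T hC hB (fun n x => esym (hBC n x)).
by exists h; split => // h' k1 k2; apply: uniq.
Qed.

Section SkeletalPushoutCriterion.
Variables (N : nat) (A B C D : graph) (a : gmap A B) (a' : gmap A C)
  (b : gmap B D) (c : gmap C D).
Hypothesis commute : forall z, b (a z) = c (a' z).
Hypothesis b_inj : injective b.
Hypothesis c_inj : injective c.
Hypothesis lift_cube : forall m, m <= N -> forall y : cpt m -> D, is_cube y ->
  (exists y', is_cube y' /\ y = fun s => b (y' s)) \/
  (exists y', is_cube y' /\ y = fun s => c (y' s)).
Hypothesis lift_cube_a' : forall m (w : cpt m -> C), is_cube w ->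
  (forall s, exists u, c (w s) = b u) ->
  exists w', is_cube w' /\ w = fun s => a' (w' s).

Lemma skcell_cover n (x : skcell D N n) :
  (exists x', skmap N b n x' = x) \/ (exists y', skmap N c n y' = x).
Proof.
case: x => x0 [hx [m [lem [y [hy [phi [bphi ex]]]]]]].
case: (lift_cube lem hy) => [[y' [hy' ey]]|[y' [hy' ey]]];
  have [z ez] := skcell_of_cube (N := N) lem hy' bphi; [left|right];
  by exists z; apply: sig_eqP; rewrite /= ez ex ey.
Qed.

Lemma skcell_cover_c n (x : skcell D N n) :
  ~ (exists x', skmap N b n x' = x) -> exists y', skmap N c n y' = x.
Proof. by case: (skcell_cover x). Qed.

(* Pulling back along [c] only needs cubes whose vertices all lie in the
   image of [b], and [in_sk_factor] provides such cubes. *)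
Lemma skcell_pullback n (x : skcell B N n) (y : skcell C N n) :
  skmap N b n x = skmap N c n y ->
  exists z : skcell A N n, skmap N a n z = x /\ skmap N a' n z = y.
Proof.
case: x => x0 [hx skx]; case: y => y0 [hy sky] e.
have e0 s : b (x0 s) = c (y0 s) by have := congr1 (fun z => proj1_sig z s) e.
have [m [lem [w [hw [wimg [psi [bpsi ey]]]]]]] := in_sk_factor sky.
have [w' [hw' ew]] : exists w', is_cube w' /\ w = fun s => a' (w' s).
  by apply: lift_cube_a' => // u; have [s ->] := wimg u; exists (x0 s).
have [z ez] := skcell_of_cube (N := N) lem hw' bpsi.
exists z; split; apply: sig_eqP; rewrite /= ez; apply: functional_extensionality => s.
- by apply: b_inj; rewrite commute e0 ey ew.
- by rewrite ey ew.
Qed.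

Lemma skel_pushout_criterion : skel_pushout N a a' b c.
Proof.
split.
  by move=> n x; apply: sig_eqP; apply: functional_extensionality => s; exact: commute.
move=> T hB hC hBC.
pose h (n : nat) (x : skcell D N n) : cell T n :=
  match excluded_middle_informative (exists x', skmap N b n x' = x) with
  | left e => hB n (proj1_sig (constructive_indefinite_description _ e))
  | right ne => hC n (proj1_sig (constructive_indefinite_description _
                                   (skcell_cover_c ne)))
  end.
have hb n x : h n (skmap N b n x) = hB n x.
  rewrite /h; case: excluded_middle_informative => [e|[]]; last by exists x.
  case: constructive_indefinite_description => x' /= ex'.
  by rewrite (skmap_inj b_inj ex').
have hc n y : h n (skmap N c n y) = hC n y.
  rewrite /h; case: excluded_middle_informative => [e|ne].
  - case: constructive_indefinite_description => x' /= ex'.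
    by have [z [<- <-]] := skcell_pullback ex'; exact: hBC.
  - case: constructive_indefinite_description => y' /= ey'.
    by rewrite (skmap_inj c_inj ey').
have hnat m n (phi : cpt m -> cpt n) (p : box_map phi) x :
    h m (act (skN D N) p x) = act T p (h n x).
  case: (skcell_cover x) => [[x' <-]|[y' <-]].
  - by rewrite -(@cfun_nat _ _ (skmap N b)) !hb (@cfun_nat _ _ hB).
  - by rewrite -(@cfun_nat _ _ (skmap N c)) !hc (@cfun_nat _ _ hC).
exists (@CMap (skN D N) T h hnat); split => // h' h'b h'c n x /=.
by case: (skcell_cover x) => [[x' <-]|[y' <-]]; rewrite ?h'b ?hb ?h'c ?hc.
Qed.
End SkeletalPushoutCriterion.

Section QuotientFacts.
Variables (X : graph) (R : X -> X -> Prop).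

Lemma qeqv_qrep (x : X) : qeqv R x (qrep (qproj R x)).
Proof.
have : qclass R (qrep (qproj R x)) (qrep (qproj R x)) by exact: rst_refl.
by rewrite -(qrepP (qproj R x)).
Qed.

Lemma qrepK : cancel (@qrep X R) (qproj R).
Proof. by move=> P; apply: sig_eqP; rewrite [RHS]qrepP. Qed.

Lemma qproj_surj (P : quotg R) : exists x, P = qproj R x.
Proof. by exists (qrep P); rewrite qrepK. Qed.

Lemma mem_qproj (x : X) : proj1_sig (qproj R x) x.
Proof. exact: rst_refl. Qed.

Lemma qeqv_mem (P : quotg R) y : proj1_sig P y -> qeqv R (qrep P) y.
Proof. by rewrite qrepP. Qed.

Lemma qproj_mem (P : quotg R) y : proj1_sig P y -> P = qproj R y.
Proof. by move/qeqv_mem/qproj_eq <-; rewrite qrepK. Qed.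

Lemma qproj_eqv x y : qproj R x = qproj R y -> qeqv R x y.
Proof. by move=> e; have := mem_qproj y; rewrite -e. Qed.

Variable inv : X -> nat.
Hypothesis inv_R : forall x y, R x y -> inv x = inv y.

Lemma inv_eqv x y : qeqv R x y -> inv x = inv y.
Proof. by elim=> [? ? /inv_R | | ? ? _ -> | ? ? ? _ -> _ ->]. Qed.

Definition qinv (P : quotg R) := inv (qrep P).

Lemma qinv_proj x : qinv (qproj R x) = inv x.
Proof. by rewrite /qinv (inv_eqv (qeqv_qrep x)). Qed.

Lemma qinv_mem (P : quotg R) y : proj1_sig P y -> qinv P = inv y.
Proof. by move/qproj_mem ->; rewrite qinv_proj. Qed.

Hypothesis inv_adj : forall x y, adj x y -> inv y <= (inv x).+1.

Lemma qinv_adj (P Q : quotg R) : adj P Q -> qinv Q <= (qinv P).+1.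
Proof. by case=> x [y [px [qy /inv_adj]]]; rewrite (qinv_mem px) (qinv_mem qy). Qed.
End QuotientFacts.

(* [sec] is a section of [phi] at the level of representatives, defined
   where the invariant [inv] lies in [region]. *)
Section QuotientSection.
Variables (XD : graph) (RD : XD -> XD -> Prop) (XX : graph) (RX : XX -> XX -> Prop).
Variable phi : gmap (quotg RX) (quotg RD).
Variable inv : XD -> nat.
Hypothesis inv_R : forall x y, RD x y -> inv x = inv y.
Variable region : nat -> Prop.
Variable sec : XD -> XX -> Prop.
Hypothesis sec_ex : forall y, region (inv y) -> exists x, sec y x.
Hypothesis sec_fun : forall y x x', region (inv y) -> sec y x -> sec y x' ->
  qproj RX x = qproj RX x'.
Hypothesis sec_R : forall y y' x x', RD y y' -> region (inv y) ->
  sec y x -> sec y' x' -> qproj RX x = qproj RX x'.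
Hypothesis secK : forall y x, region (inv y) -> sec y x ->
  phi (qproj RX x) = qproj RD y.

Lemma sec_eqv y y' : qeqv RD y y' -> region (inv y) ->
  forall x x', sec y x -> sec y' x' -> qproj RX x = qproj RX x'.
Proof.
elim=> {y y'}.
- by move=> y y' r ry x x'; apply: sec_R r ry.
- by move=> y ry x x'; apply: sec_fun ry.
- move=> y y' e IH ry' x x' c1 c2; symmetry.
  by apply: IH x' x c2 c1; rewrite (inv_eqv inv_R e).
- move=> y z y' e1 IH1 e2 IH2 ry x x' c1 c2.
  have rz : region (inv z) by rewrite -(inv_eqv inv_R e1).
  have [xz cz] := sec_ex rz.
  by rewrite (IH1 ry x xz c1 cz) (IH2 rz xz x' cz c2).
Qed.

Lemma sec_inj :
  (forall x, exists y x', region (inv y) /\ phi (qproj RX x) = qproj RD y /\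
      sec y x' /\ qproj RX x' = qproj RX x) ->
  injective phi.
Proof.
move=> hsec P Q.
have [x ->] := qproj_surj P; have [x2 -> e] := qproj_surj Q.
have [y [x' [ry [e1 [c1 <-]]]]] := hsec x.
have [y2 [x2' [_ [e2 [c2 <-]]]]] := hsec x2.
by apply: (sec_eqv _ ry c1 c2); apply: qproj_eqv; rewrite -e1 -e2.
Qed.

Variable edge_ok : XD -> XD -> Prop.
Hypothesis sec_adj : forall y y' x x', adj y y' -> edge_ok y y' ->
  sec y x -> sec y' x' -> adj (qproj RX x) (qproj RX x').

Lemma sec_lift_cube m (y0 : cpt m -> quotg RD) :
  (forall s, region (qinv inv (y0 s))) ->
  (forall s t, cadj s t -> s <> t -> exists y y', proj1_sig (y0 s) y /\
      proj1_sig (y0 t) y' /\ adj y y' /\ edge_ok y y') ->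
  exists y' : cpt m -> quotg RX, is_cube y' /\ forall s, phi (y' s) = y0 s.
Proof.
move=> hreg hedge.
have hx s : exists x, sec (qrep (y0 s)) x by apply: sec_ex; apply: hreg.
pose xs s := proj1_sig (constructive_indefinite_description _ (hx s)).
have xsP s : sec (qrep (y0 s)) (xs s).
  by rewrite /xs; case: constructive_indefinite_description.
have xsE s y x : proj1_sig (y0 s) y -> sec y x -> qproj RX x = qproj RX (xs s).
  by move=> my cx; symmetry; apply: (sec_eqv (qeqv_mem my) (hreg s) (xsP s) cx).
exists (fun s => qproj RX (xs s)); split.
- move=> s t st; case: (classic (s = t)) => [<-|nst]; first exact: adj_refl.
  have [y [y' [my [my' [a ok]]]]] := hedge s t st nst.
  have ry : region (inv y) by rewrite -(qinv_mem inv_R my).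
  have ry' : region (inv y') by rewrite -(qinv_mem inv_R my').
  have [x cx] := sec_ex ry; have [x' cx'] := sec_ex ry'.
  rewrite -(xsE s y x my cx) -(xsE t y' x' my' cx').
  exact: sec_adj a ok cx cx'.
- by move=> s; rewrite (secK (hreg s) (xsP s)) qrepK.
Qed.
End QuotientSection.

Definition hamming m (s t : cpt m) := #|[pred j | s j != t j]|.

Lemma hamming_sym m (s t : cpt m) : hamming s t = hamming t s.
Proof. by apply: eq_card => j; rewrite !inE /= eq_sym. Qed.

Lemma hamming_le m (s t : cpt m) : hamming s t <= m.
Proof. by rewrite /hamming (leq_trans (max_card _)) ?card_ord. Qed.

Lemma hamming_edge m (s t u : cpt m) :
  s <> t -> hamming u s <= m.-1 \/ hamming u t <= m.-1.
Proof.
move=> nst; have [j hj] : exists j, s j != t j.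
  apply: NNPP => nj; apply: nst; apply: functional_extensionality => j.
  by apply/eqP; apply: negbNE; apply/negP => h; apply: nj; exists j.
have agree w : u j = w j -> hamming u w <= m.-1.
  move=> e; have <- : #|predC1 j| = m.-1 by rewrite cardC1 card_ord.
  by apply: subset_leq_card; apply/subsetP => i; rewrite !inE; apply: contra => /eqP ->; apply/eqP.
(* [u] agrees with [s] or with [t] where these two differ. *)
by move: hj; case: (u j) (s j) (t j) (agree s) (agree t) => [] [] [] hs ht; auto.
Qed.

Lemma hamming_lipschitz m (P : cpt m -> nat) :
  (forall s t, cadj s t -> P t <= (P s).+1) ->
  forall s t, P t <= P s + hamming s t.
Proof.
move=> hP s t; move e: (hamming s t) => n; elim: n s e => [|n IH] s e.
  have -> : s = t; last by rewrite addn0.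
  apply: functional_extensionality => j; apply/eqP; apply: contraT => h.
  have : 0 < hamming s t by apply/card_gt0P; exists j.
  by rewrite e.
have /card_gt0P[j /[!inE] /= hj] : 0 < hamming s t by rewrite e.
pose s' i := if i == j then t j else s i.
have ss' : cadj s s'.
  by move=> i i'; rewrite /s'; case: eqP => [->|//]; case: eqP => [->|].
have e' : hamming s' t = n.
  have := cardD1 j [pred i | s i != t i]; rewrite -/(hamming s t) e inE /= hj add1n => -[] ->.
  by apply: eq_card => i; rewrite !inE /s'; case: ifP => [/eqP ->|]; rewrite ?eqxx.
by have := IH s' e'; have := hP s s' ss'; lia.
Qed.

Lemma clamp_iadj m a b : (a = b \/ a.+1 = b \/ b.+1 = a) -> iadj (clamp m a) (clamp m b).
Proof. rewrite /iadj !clampE; lia. Qed.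

(* [l0] and [r0] on representatives; the [+ 0] make [l0] and [r0] reduce
   to [cproj] of these. *)
Definition lrep (G H K : graph) k m (x : cylX G H G k) : cylX G H K m :=
  match x with
  | inl h => inl h
  | inr (inl (v, t)) => inr (inl (v, clamp m (t + 0)))
  | inr (inr v) => inr (inl (v, clamp m (k + 0)))
  end.

Definition rrep (G H K : graph) k m (x : cylX G G K k) : cylX G H K m :=
  match x with
  | inl v => inr (inl (v, clamp m (0 + (m - k))))
  | inr (inl (v, t)) => inr (inl (v, clamp m (t + (m - k))))
  | inr (inr w) => inr (inr w)
  end.

Lemma lrep_adj (G H K : graph) k m (x y : cylX G H G k) :
  adj x y -> adj (lrep K m x) (lrep K m y).
Proof.
case: x => [h|[[v t]|v]]; case: y => [h'|[[v' t']|v']] //= a; last by right.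
case: a => /= [[-> a]|[a ->]]; last by right.
by left; split=> //; apply: clamp_adj.
Qed.

Lemma rrep_adj (G H K : graph) k m (x y : cylX G G K k) :
  adj x y -> adj (rrep H m x) (rrep H m y).
Proof.
case: x => [h|[[v t]|v]]; case: y => [h'|[[v' t']|v']] //= a; first by right.
case: a => /= [[-> a]|[a ->]]; last by right.
by left; split=> //; apply: clamp_adj.
Qed.

Section CylinderMaps.
Variables (G H K : graph) (f : gmap G H) (g : gmap G K).

Lemma lmapE k m x : lmap f g k m (cproj f (gid G) x) = cproj f g (lrep K m x).
Proof.
have -> : lmap f g k m (cproj f (gid G) x) = l0 f g m x.
  symmetry; apply: (psi_eqv (psi := GMap (l0_gmap f g m)) (@l0_R _ _ _ f g k m)).
  exact: qeqv_qrep.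
by case: x => [h|[[v t]|v]].
Qed.

Lemma rmapE k m x : rmap f g k m (cproj (gid G) g x) = cproj f g (rrep H m x).
Proof.
have -> : rmap f g k m (cproj (gid G) g x) = r0 f g m x.
  symmetry; apply: (psi_eqv (psi := GMap (r0_gmap f g m)) (@r0_R _ _ _ f g k m)).
  exact: qeqv_qrep.
by case: x => [h|[[v t]|v]].
Qed.
End CylinderMaps.

Definition imageb (X Y : Type) (h : X -> Y) (y : Y) : bool :=
  if excluded_middle_informative (exists x, h x = y) then true else false.

Lemma imagebP (X Y : Type) (h : X -> Y) (y : Y) :
  reflect (exists x, h x = y) (imageb h y).
Proof. by rewrite /imageb; case: excluded_middle_informative => e; constructor. Qed.

Lemma imageb_img (X Y : Type) (h : X -> Y) x : imageb h (h x).
Proof. by apply/imagebP; exists x. Qed.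

Definition gcomp (X Y Z : graph) (u : gmap X Y) (w : gmap Y Z) : gmap X Z :=
  @GMap X Z (fun x => w (u x)) (fun x y a => gfunP w (gfunP u a)).

Ltac congr_level := rewrite /=; simpl in *;
  congr (inr (inl (_, _))); apply: val_inj; rewrite /= ?clampE; lia.

Section CylinderSquare.
Variables (G H K : graph) (f : gmap G H) (g : gmap G K) (p q1 q2 : nat).
Hypothesis f_inj : q1 = 0 -> injective f.
Hypothesis g_inj : q2 = 0 -> injective g.
Hypothesis q_pos : 0 < q1 + q2.

Local Notation M := (p + q1 + q2).
Local Notation XD := (cylX G H K M).
Local Notation D := (Cyl f g M).
Local Notation XB := (cylX G H G (p + q1)).
Local Notation B := (Cyl f (gid G) (p + q1)).
Local Notation XC := (cylX G G K (p + q2)).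
Local Notation C := (Cyl (gid G) g (p + q2)).
Local Notation XA := (cylX G G G p).
Local Notation A := (Cyl (gid G) (gid G) p).
Local Notation bm := (lmap f g (p + q1) M).
Local Notation cm := (rmap f g (p + q2) M).
Local Notation am := (rmap f (gid G) p (p + q1)).
Local Notation am' := (lmap (gid G) g p (p + q2)).

(* Vertices of G [] I_M at height t sit at level t+1; the vertices of H
   glued to height 0 at level 1 and the other ones at 0; dually for K. *)
Definition level (y : XD) : nat :=
  match y with
  | inl h => imageb f h
  | inr (inl (_, t)) => t.+1
  | inr (inr k) => M.+2 - imageb g k
  end.

Definition inH (y : XD) := if y is inl _ then true else false.
Definition inK (y : XD) := if y is inr (inr _) then true else false.

Lemma level_inH y : inH y -> level y <= 1.
Proof. by case: y => [h|//] _; apply: leq_b1. Qed.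

Lemma level_inK y : inK y -> M.+1 <= level y.
Proof. by case: y => [|[|k]] //= _; case: imageb => /=; lia. Qed.

Lemma level_K_low k : level (inr (inr k)) <= p + q1 + 1 -> q2 = 0.
Proof. by have := @level_inK (inr (inr k)) isT; lia. Qed.

Lemma level_H_high h : q1 < level (inl h) -> q1 = 0.
Proof. by have := @level_inH (inl h) isT; lia. Qed.

Lemma level_image_f h : 1 <= level (inl h) -> exists v, f v = h.
Proof. by rewrite /= lt0b => /imagebP. Qed.

Lemma level_image_g k : level (inr (inr k)) <= M.+1 -> exists v, g v = k.
Proof. by rewrite /=; case: imagebP => //= _; lia. Qed.

Lemma level_R y y' : cylR f g y y' -> level y = level y'.
Proof. by case=> v [[-> ->]|[-> ->]] /=; rewrite imageb_img. Qed.

Lemma level_adj y y' : adj y y' -> level y' <= (level y).+1.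
Proof.
case: y => [h|[[v t]|k]]; case: y' => [h'|[[v' t']|k']] //= a.
- by have := @level_inH (inl h') isT; lia.
- by case: a => /= [[_ a]|[_ ->]] //; rewrite /iadj in a; lia.
- by case: imageb; case: imageb => /=; lia.
Qed.

Local Notation qlevel := (qinv level).

Lemma qlevel_cube_lipschitz m (y : cpt m -> D) : is_cube y ->
  forall s t, qlevel (y t) <= qlevel (y s) + hamming s t.
Proof.
move=> hy; apply: hamming_lipschitz => s t st.
exact: (qinv_adj level_R level_adj (hy s t st)).
Qed.

Definition secB (y : XD) (x : XB) : Prop :=
  match y with
  | inl h => x = inl h
  | inr (inl (v, t)) => x = inr (inl (v, clamp (p + q1) t))
  | inr (inr k) => exists v, g v = k /\ x = inr (inr v)
  end.

Definition regionB n := n <= p + q1 + 1.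

Lemma secB_ex y : regionB (level y) -> exists x, secB y x.
Proof.
rewrite /regionB; case: y => [h|[[v t]|k]] r; try by eexists.
have [v <-] : exists v, g v = k by apply: level_image_g; apply: leq_trans r _; lia.
by exists (inr (inr v)), v.
Qed.

Lemma secB_fun y x x' : regionB (level y) -> secB y x -> secB y x' ->
  cproj f (gid G) x = cproj f (gid G) x'.
Proof.
rewrite /regionB; case: y => [h|[[v t]|k]] r; try by move=> -> ->.
by move=> [v [<- ->]] [v' [e ->]]; rewrite (g_inj (level_K_low r) e).
Qed.

Lemma secB_R y y' x x' : cylR f g y y' -> regionB (level y) -> secB y x ->
  secB y' x' -> cproj f (gid G) x = cproj f (gid G) x'.
Proof.
rewrite /regionB; case=> v [[-> ->]|[-> ->]] /= r.
- by move=> -> ->; apply: cproj_R; exists v; left; split => //; congr_level.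
- move=> -> [v' [e ->]]; have q20 : q2 = 0 by lia.
  rewrite -(g_inj q20 e); apply: cproj_R; exists v'; right; split => //; congr_level.
Qed.

Lemma secBK y x : regionB (level y) -> secB y x -> bm (cproj f (gid G) x) = cproj f g y.
Proof.
rewrite /regionB; case: y => [h|[[v t]|k]] r.
- by move=> ->; rewrite lmapE.
- by move=> ->; rewrite lmapE; congr (cproj f g _); congr_level.
- case=> v [<- ->]; rewrite lmapE.
  have q20 := level_K_low r.
  by apply: cproj_R; exists v; right; split => //; congr_level.
Qed.

Lemma secB_image x : exists y x', regionB (level y) /\
  bm (cproj f (gid G) x) = cproj f g y /\ secB y x' /\
  cproj f (gid G) x' = cproj f (gid G) x.
Proof.
exists (lrep K M x); rewrite /regionB lmapE.
case: x => [h|[[v t]|v]].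
- by exists (inl h); split => //; apply: leq_trans (@level_inH (inl h) isT) _; lia.
- exists (inr (inl (v, clamp (p + q1) (clamp M (t + 0))))).
  have ht := ltn_ord t; rewrite /= clampE; split; first lia.
  by do 2!split => //; congr (cproj _ _ _); congr_level.
- exists (inr (inl (v, clamp (p + q1) (clamp M (p + q1 + 0))))).
  rewrite /= clampE; split; first lia.
  by do 2!split => //; apply: cproj_R; exists v; right; split => //; congr_level.
Qed.

Lemma secB_adj y y' x x' : adj y y' -> ~~ (inK y && inK y') -> secB y x ->
  secB y' x' -> adj (cproj f (gid G) x) (cproj f (gid G) x').
Proof.
move=> a ok c1 c2; apply: cproj_gmap; move: a ok c1 c2.
case: y => [h|[[v t]|k]]; case: y' => [h'|[[v' t']|k']] //= a _ -> -> //.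
case: a => /= [[-> a]|[a ->]]; last by right.
by left; split => //; apply: clamp_iadj; rewrite /iadj in a.
Qed.

Lemma bm_inj : injective bm.
Proof.
exact: (sec_inj (phi := bm) level_R (region := regionB) secB_ex secB_fun secB_R
  secB_image).
Qed.

Lemma bm_lift_cube m (y : cpt m -> D) : is_cube y ->
  (forall s, qlevel (y s) <= p + q1 + 1) ->
  (forall s t, cadj s t -> s <> t -> qlevel (y s) <= M \/ qlevel (y t) <= M) ->
  exists y', is_cube y' /\ y = fun s => bm (y' s).
Proof.
move=> hy low edge.
have hedge s t : cadj s t -> s <> t -> exists y1 y2, proj1_sig (y s) y1 /\
    proj1_sig (y t) y2 /\ adj y1 y2 /\ ~~ (inK y1 && inK y2).
  move=> st nst; have [y1 [y2 [m1 [m2 a]]]] := hy s t st.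
  exists y1, y2; do 3!split => //; apply/negP => /andP[k1 k2].
  have := edge s t st nst; rewrite (qinv_mem level_R m1) (qinv_mem level_R m2).
  by have := level_inK k1; have := level_inK k2; lia.
have [y' [cy' ey']] := sec_lift_cube (phi := bm) level_R (region := regionB)
  secB_ex secB_fun secB_R secBK secB_adj low hedge.
by exists y'; split => //; apply: functional_extensionality => s; rewrite ey'.
Qed.

Definition secC (y : XD) (x : XC) : Prop :=
  match y with
  | inl h => exists v, f v = h /\ x = inl v
  | inr (inl (v, t)) => x = inr (inl (v, clamp (p + q2) (t - q1)))
  | inr (inr k) => x = inr (inr k)
  end.

Definition regionC n := q1 < n.

Lemma secC_ex y : regionC (level y) -> exists x, secC y x.
Proof.
rewrite /regionC; case: y => [h|[[v t]|k]] r; try by eexists.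
have [v <-] : exists v, f v = h by apply: level_image_f; apply: leq_trans r.
by exists (inl v), v.
Qed.

Lemma secC_fun y x x' : regionC (level y) -> secC y x -> secC y x' ->
  cproj (gid G) g x = cproj (gid G) g x'.
Proof.
rewrite /regionC; case: y => [h|[[v t]|k]] r; try by move=> -> ->.
by move=> [v [<- ->]] [v' [e ->]]; rewrite (f_inj (level_H_high r) e).
Qed.

Lemma secC_R y y' x x' : cylR f g y y' -> regionC (level y) -> secC y x ->
  secC y' x' -> cproj (gid G) g x = cproj (gid G) g x'.
Proof.
rewrite /regionC; case=> v [[-> ->]|[-> ->]] /= r.
- move=> -> [v' [e ->]]; have q10 : q1 = 0 by lia.
  rewrite -(f_inj q10 e); apply: cproj_R; exists v'; left; split => //; congr_level.
- by move=> -> ->; apply: cproj_R; exists v; right; split => //; congr_level.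
Qed.

Lemma secCK y x : regionC (level y) -> secC y x -> cm (cproj (gid G) g x) = cproj f g y.
Proof.
rewrite /regionC; case: y => [h|[[v t]|k]] r.
- case=> v [<- ->]; rewrite rmapE; have q10 := level_H_high r.
  by apply: cproj_R; exists v; left; split => //; congr_level.
- by move=> ->; rewrite rmapE; congr (cproj f g _); have ht := ltn_ord t; congr_level.
- by move=> ->; rewrite rmapE.
Qed.

Lemma secC_image x : exists y x', regionC (level y) /\
  cm (cproj (gid G) g x) = cproj f g y /\ secC y x' /\
  cproj (gid G) g x' = cproj (gid G) g x.
Proof.
exists (rrep H M x); rewrite /regionC rmapE.
case: x => [v|[[v t]|k]].
- exists (inr (inl (v, clamp (p + q2) (clamp M (0 + (M - (p + q2))) - q1)))).
  rewrite /= clampE; split; first lia.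
  by do 2!split => //; apply: cproj_R; exists v; left; split => //; congr_level.
- exists (inr (inl (v, clamp (p + q2) (clamp M (t + (M - (p + q2))) - q1)))).
  have ht := ltn_ord t; rewrite /= clampE; split; first lia.
  by do 2!split => //; congr (cproj _ _ _); congr_level.
- by exists (inr (inr k)); split => //; apply: leq_trans (@level_inK (inr (inr k)) isT); lia.
Qed.

Lemma secC_adj y y' x x' : adj y y' -> ~~ (inH y && inH y') -> secC y x ->
  secC y' x' -> adj (cproj (gid G) g x) (cproj (gid G) g x').
Proof.
move=> a ok c1 c2; apply: cproj_gmap; move: a ok c1 c2.
case: y => [h|[[v t]|k]]; case: y' => [h'|[[v' t']|k']] //= a _ -> -> //.
case: a => /= [[-> a]|[a ->]]; last by right.
by left; split => //; apply: clamp_iadj; rewrite /iadj in a; lia.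
Qed.

Lemma cm_inj : injective cm.
Proof.
exact: (sec_inj (phi := cm) level_R (region := regionC) secC_ex secC_fun secC_R
  secC_image).
Qed.

Lemma cm_lift_cube m (y : cpt m -> D) : is_cube y ->
  (forall s, q1 < qlevel (y s)) ->
  (forall s t, cadj s t -> s <> t -> 1 < qlevel (y s) \/ 1 < qlevel (y t)) ->
  exists y', is_cube y' /\ y = fun s => cm (y' s).
Proof.
move=> hy high edge.
have hedge s t : cadj s t -> s <> t -> exists y1 y2, proj1_sig (y s) y1 /\
    proj1_sig (y t) y2 /\ adj y1 y2 /\ ~~ (inH y1 && inH y2).
  move=> st nst; have [y1 [y2 [m1 [m2 a]]]] := hy s t st.
  exists y1, y2; do 3!split => //; apply/negP => /andP[k1 k2].
  have := edge s t st nst; rewrite (qinv_mem level_R m1) (qinv_mem level_R m2).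
  by have := level_inH k1; have := level_inH k2; lia.
have [y' [cy' ey']] := sec_lift_cube (phi := cm) level_R (region := regionC)
  secC_ex secC_fun secC_R secCK secC_adj high hedge.
by exists y'; split => //; apply: functional_extensionality => s; rewrite ey'.
Qed.

Definition secA (y : XD) (x : XA) : Prop :=
  match y with
  | inl h => exists v, f v = h /\ x = inl v
  | inr (inl (v, t)) => x = inr (inl (v, clamp p (t - q1)))
  | inr (inr k) => exists v, g v = k /\ x = inr (inr v)
  end.

Definition regionA n := q1 < n /\ n <= p + q1 + 1.

Lemma secA_ex y : regionA (level y) -> exists x, secA y x.
Proof.
case: y => [h|[[v t]|k]] [r1 r2]; try by eexists.
- have [v <-] : exists v, f v = h by apply: level_image_f; apply: leq_trans r1.
  by exists (inl v), v.
- have [v <-] : exists v, g v = k by apply: level_image_g; apply: leq_trans r2 _; lia.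
  by exists (inr (inr v)), v.
Qed.

Lemma secA_fun y x x' : regionA (level y) -> secA y x -> secA y x' ->
  cproj (gid G) (gid G) x = cproj (gid G) (gid G) x'.
Proof.
case: y => [h|[[v t]|k]] [r1 r2]; try by move=> -> ->.
- by move=> [v [<- ->]] [v' [e ->]]; rewrite (f_inj (level_H_high r1) e).
- by move=> [v [<- ->]] [v' [e ->]]; rewrite (g_inj (level_K_low r2) e).
Qed.

Lemma secA_R y y' x x' : cylR f g y y' -> regionA (level y) -> secA y x ->
  secA y' x' -> cproj (gid G) (gid G) x = cproj (gid G) (gid G) x'.
Proof.
rewrite /regionA; case=> v [[-> ->]|[-> ->]] /= [r1 r2] -> [v' [e ->]].
- have q10 : q1 = 0 by lia.
  rewrite -(f_inj q10 e); apply: cproj_R; exists v'; left; split => //; congr_level.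
- have q20 : q2 = 0 by lia.
  rewrite -(g_inj q20 e); apply: cproj_R; exists v'; right; split => //; congr_level.
Qed.

Definition phiA : gmap A D := gcomp am' cm.

Lemma secAK y x : regionA (level y) -> secA y x ->
  phiA (cproj (gid G) (gid G) x) = cproj f g y.
Proof.
rewrite -[phiA _]/(cm (am' _)) lmapE rmapE; case: y => [h|[[v t]|k]] [r1 r2].
- case=> v [<- ->]; have q10 := level_H_high r1.
  by apply: cproj_R; exists v; left; split => //; congr_level.
- by move=> ->; congr (cproj f g _); have ht := ltn_ord t; congr_level.
- case=> v [<- ->]; have q20 := level_K_low r2.
  by apply: cproj_R; exists v; right; split => //; congr_level.
Qed.

Lemma secA_adj y y' x x' : adj y y' -> ~~ (inH y && inH y') && ~~ (inK y && inK y') ->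
  secA y x -> secA y' x' -> adj (cproj (gid G) (gid G) x) (cproj (gid G) (gid G) x').
Proof.
move=> a ok c1 c2; apply: cproj_gmap; move: a ok c1 c2.
case: y => [h|[[v t]|k]]; case: y' => [h'|[[v' t']|k']] //= a _ -> -> //.
case: a => /= [[-> a]|[a ->]]; last by right.
by left; split => //; apply: clamp_iadj; rewrite /iadj in a; lia.
Qed.

Lemma qlevel_cm u : q1 < qlevel (cm u).
Proof.
have [x ->] := qproj_surj u; rewrite rmapE (qinv_proj level_R).
by case: x => [v|[[v t]|k]] /=; rewrite ?clampE; lia.
Qed.

Lemma qlevel_bm u : qlevel (bm u) <= p + q1 + 1.
Proof.
have [x ->] := qproj_surj u; rewrite lmapE (qinv_proj level_R).
case: x => [h|[[v t]|v]] /=; rewrite ?clampE; last lia.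
- by have := leq_b1 (imageb f h); lia.
- by have := ltn_ord t; lia.
Qed.

Lemma square_commutes z : bm (am z) = cm (am' z).
Proof.
have [x ->] := qproj_surj z; rewrite rmapE lmapE lmapE rmapE; congr (cproj f g _).
by case: x => [v|[[v t]|v]]; [|have ht := ltn_ord t|]; congr_level.
Qed.

(* On a cube of dimension at most p+1 the levels differ by at most p+1,
   and every edge has an endpoint within distance p of any given vertex; so
   a cube reaching down to level q1 stays within the levels <= p+q1+1, and
   one reaching up to level p+q1+2 stays within the levels >= q1+1. *)
Lemma lift_cube_D m : m <= p.+1 -> forall y : cpt m -> D, is_cube y ->
  (exists y', is_cube y' /\ y = fun s => bm (y' s)) \/
  (exists y', is_cube y' /\ y = fun s => cm (y' s)).
Proof.
move=> lem y hy.
have lip := qlevel_cube_lipschitz hy.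
have spread s t : qlevel (y t) <= qlevel (y s) + p.+1 by have := lip s t; have := hamming_le s t; lia.
have near s0 s t : s <> t ->
    (qlevel (y s) <= qlevel (y s0) + p /\ qlevel (y s0) <= qlevel (y s) + p) \/
    (qlevel (y t) <= qlevel (y s0) + p /\ qlevel (y s0) <= qlevel (y t) + p).
  move=> nst; have := lip s0 s; have := lip s s0; have := lip s0 t; have := lip t s0.
  rewrite !(hamming_sym _ s0).
  by case: (hamming_edge s0 nst); lia.
case: (q2 =P 0) => [q20|q2n0].
- case: (classic (exists s0, qlevel (y s0) <= q1)) => [[s0 hs0]|high].
  + left; apply: bm_lift_cube => // [s|s t _ nst].
    * by have := spread s0 s; lia.
    * by have := near s0 s t nst; lia.
  + right; apply: cm_lift_cube => // [s|s t _ _].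
    * by rewrite ltnNge; apply/negP => h; apply: high; exists s.
    * by left; rewrite ltnNge; apply/negP => h; apply: high; exists s; lia.
- case: (classic (exists s0, p + q1 + 1 < qlevel (y s0))) => [[s0 hs0]|low].
  + right; apply: cm_lift_cube => // [s|s t _ nst].
    * by have := spread s s0; lia.
    * by have := near s0 s t nst; lia.
  + left; apply: bm_lift_cube => // [s|s t _ _].
    * by rewrite leqNgt; apply/negP => h; apply: low; exists s.
    * by left; rewrite leqNgt; apply/negP => h; apply: low; exists s; lia.
Qed.

Lemma am'_lift_cube : 0 < q2 -> forall m (w : cpt m -> C), is_cube w ->
  (forall s, exists u, cm (w s) = bm u) ->
  exists w', is_cube w' /\ w = fun s => am' (w' s).
Proof.
move=> q2_pos m w hw hbm.
have reg s : regionA (qlevel (cm (w s))).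
  by split; [exact: qlevel_cm | have [u ->] := hbm s; exact: qlevel_bm].
have hedge s t : cadj s t -> s <> t -> exists y1 y2, proj1_sig (cm (w s)) y1 /\
    proj1_sig (cm (w t)) y2 /\ adj y1 y2 /\
    ~~ (inH y1 && inH y2) && ~~ (inK y1 && inK y2).
  move=> st _; have [x1 [x2 [m1 [m2 a]]]] := hw s t st.
  have e1 : cm (w s) = cproj f g (rrep H M x1) by rewrite (qproj_mem m1) rmapE.
  have e2 : cm (w t) = cproj f g (rrep H M x2) by rewrite (qproj_mem m2) rmapE.
  exists (rrep H M x1), (rrep H M x2); rewrite e1 e2.
  split; first exact: mem_qproj.
  split; first exact: mem_qproj.
  split; first exact: rrep_adj.
  apply/andP; split; first by case: (x1) => [|[[]|]].
  apply/negP => /andP[k1 _]; have [_] := reg s; rewrite e1 (qinv_proj level_R).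
  by have := level_inK k1; lia.
have [w' [cw' ew']] := sec_lift_cube (phi := phiA) level_R (region := regionA)
  secA_ex secA_fun secA_R secAK secA_adj reg hedge.
exists w'; split => //; apply: functional_extensionality => s; apply: cm_inj.
by rewrite -ew'.
Qed.

Lemma am_lift_cube : q2 = 0 -> forall m (w : cpt m -> B), is_cube w ->
  (forall s, exists u, bm (w s) = cm u) ->
  exists w', is_cube w' /\ w = fun s => am (w' s).
Proof.
move=> q20 m w hw hcm.
have reg s : regionA (qlevel (bm (w s))).
  by split; [have [u ->] := hcm s; exact: qlevel_cm | exact: qlevel_bm].
have hedge s t : cadj s t -> s <> t -> exists y1 y2, proj1_sig (bm (w s)) y1 /\
    proj1_sig (bm (w t)) y2 /\ adj y1 y2 /\
    ~~ (inH y1 && inH y2) && ~~ (inK y1 && inK y2).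
  move=> st _; have [x1 [x2 [m1 [m2 a]]]] := hw s t st.
  have e1 : bm (w s) = cproj f g (lrep K M x1) by rewrite (qproj_mem m1) lmapE.
  have e2 : bm (w t) = cproj f g (lrep K M x2) by rewrite (qproj_mem m2) lmapE.
  exists (lrep K M x1), (lrep K M x2); rewrite e1 e2.
  split; first exact: mem_qproj.
  split; first exact: mem_qproj.
  split; first exact: lrep_adj.
  apply/andP; split; last by case: (x1) => [|[[]|]].
  apply/negP => /andP[h1 _]; have [+ _] := reg s; rewrite e1 (qinv_proj level_R).
  by have := level_inH h1; lia.
have [w' [cw' ew']] := sec_lift_cube (phi := phiA) level_R (region := regionA)
  secA_ex secA_fun secA_R secAK secA_adj reg hedge.
exists w'; split => //; apply: functional_extensionality => s; apply: bm_inj.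
by rewrite square_commutes -ew'.
Qed.

Lemma cyl_square_skel_pushout : cyl_square f g p q1 q2.
Proof.
case: (q2 =P 0) => [q20|q2_gt0].
- apply: is_pushout_sym; apply: skel_pushout_criterion.
  + by move=> z; rewrite square_commutes.
  + exact: cm_inj.
  + exact: bm_inj.
  + by move=> m lem y hy; case: (lift_cube_D lem hy); [right|left].
  + exact: am_lift_cube.
- apply: skel_pushout_criterion.
  + exact: square_commutes.
  + exact: bm_inj.
  + exact: cm_inj.
  + exact: lift_cube_D.
  + by apply: am'_lift_cube; lia.
Qed.
End CylinderSquare.

Theorem lemma2p18 (G H K : graph) (f : gmap G H) (g : gmap G K) :
  (forall p q1 q2 : nat, 1 <= q1 -> 1 <= q2 -> cyl_square f g p q1 q2) /\
  (injective f -> forall p q2 : nat, 1 <= q2 -> cyl_square f g p 0 q2) /\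
  (injective g -> forall p q1 : nat, 1 <= q1 -> cyl_square f g p q1 0).
Proof.
split; [|split].
- move=> p q1 q2 /lt0n_neq0/eqP q1_neq0 /lt0n_neq0/eqP q2_neq0.
  by apply: cyl_square_skel_pushout => [/q1_neq0[]|/q2_neq0[]|]; lia.
- move=> f_inj p q2 /lt0n_neq0/eqP q2_neq0.
  by apply: cyl_square_skel_pushout => [//|/q2_neq0[]|]; lia.
- move=> g_inj p q1 /lt0n_neq0/eqP q1_neq0.
  by apply: cyl_square_skel_pushout => [/q1_neq0[]|//|]; lia.
Qed.
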